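(* Let $R$ be a binary relation on the nodes of a $\lambda$-graph. If $R^{\Downarrow}$ is homogeneous, then $R^{\#}=(R^{\Downarrow})^*$.
   Context: A $\lambda$-graph is a finite directed graph whose nodes are of four kinds: an application node $@(n_1,n_2)$ has exactly two children, its left child $n_1$ and its right child $n_2$; an abstraction node $\lambda(n)$ has exactly one child, its body $n$; a free variable node has no children; a bound variable node $\mathrm{var}(l)$ has exactly one outgoing binding edge, to an abstraction node $l$ (its binder). (It is moreover required to be acyclic when binding edges are ignored, and dominated.) Two nodes are homogeneous if both are application nodes, or both abstraction nodes, or both free variable nodes, or both bound variable nodes; a binary relation $R$ on nodes is homogeneous if it only relates homogeneous nodes. Rules: $(\swarrow)$: $@(n_1,n_2)\,R\,@(m_1,m_2)$ implies $n_1\,R\,m_1$; $(\searrow)$: $@(n_1,n_2)\,R\,@(m_1,m_2)$ implies $n_2\,R\,m_2$; $(\downarrow)$: $\lambda(n)\,R\,\lambda(m)$ implies $n\,R\,m$. $R$ is propagated if closed under $(\swarrow),(\downarrow),(\searrow)$. $R^*$ denotes the reflexive–symmetric–transitive closure of $R$; $R^{\Downarrow}$ (propagation) is the smallest propagated relation containing $R$; $R^{\#}$ (spreading) is the smallest propagated equivalence relation containing $R$. *)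

From mathcomp Require Import all_boot.
From Stdlib Require Import Relations.
Set Implicit Arguments. Unset Strict Implicit. Unset Printing Implicit Defensive.

(** Kinds of nodes of a lambda-graph, with their outgoing edges. *)
Inductive lnode (V : Type) :=
  | NApp of V & V   (* application @(n1,n2): left child, right child *)
  | NAbs of V
  | NFree
  | NBVar of V.     (* bound variable var(l): binding edge to l *)

Section LambdaGraph.
Variables (V : finType) (lab : V -> lnode V).

(** child edges (binding edges excluded) *)
Definition child : rel V := fun x y =>
  match lab x with
  | NApp a b => (y == a) || (y == b)
  | NAbs a => y == a
  | _ => false
  end.

Definition is_abs (x : V) : bool := if lab x is NAbs _ then true else false.

Definition is_root (r : V) : bool := [forall x, ~~ child x r].

Definition acyclic_children : Prop :=
  forall x y, child x y -> ~~ connect child y x.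

Definition binders_abs : Prop :=
  forall v l, lab v = NBVar l -> is_abs l.

Definition dominated : Prop :=
  forall v l, lab v = NBVar l ->
  forall r s, is_root r -> path child r s -> last r s = v -> l \in r :: s.

Definition lambda_graph : Prop :=
  [/\ binders_abs, acyclic_children & dominated].

Definition homogeneous_nodes (x y : V) : Prop :=
  match lab x, lab y with
  | NApp _ _, NApp _ _ | NAbs _, NAbs _ | NFree, NFree | NBVar _, NBVar _ => True
  | _, _ => False
  end.

Definition homogeneous (R : relation V) : Prop :=
  forall x y, R x y -> homogeneous_nodes x y.

(** closure under the rules (swarrow), (searrow), (downarrow) *)
Definition propagated (R : relation V) : Prop :=
  (forall x y a1 a2 b1 b2, R x y -> lab x = NApp a1 a2 -> lab y = NApp b1 b2 ->
     R a1 b1 /\ R a2 b2) /\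
  (forall x y a b, R x y -> lab x = NAbs a -> lab y = NAbs b -> R a b).

(** R^{Downarrow}: smallest propagated relation containing R *)
Inductive propagation (R : relation V) : relation V :=
  | prop_base x y : R x y -> propagation R x y
  | prop_left x y a1 a2 b1 b2 : propagation R x y ->
      lab x = NApp a1 a2 -> lab y = NApp b1 b2 -> propagation R a1 b1
  | prop_right x y a1 a2 b1 b2 : propagation R x y ->
      lab x = NApp a1 a2 -> lab y = NApp b1 b2 -> propagation R a2 b2
  | prop_down x y a b : propagation R x y ->
      lab x = NAbs a -> lab y = NAbs b -> propagation R a b.

(** R^#: smallest propagated equivalence relation containing R *)
Inductive spreading (R : relation V) : relation V :=
  | spr_base x y : R x y -> spreading R x y
  | spr_refl x : spreading R x x
  | spr_sym x y : spreading R x y -> spreading R y x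
  | spr_trans x y z : spreading R x y -> spreading R y z -> spreading R x z
  | spr_left x y a1 a2 b1 b2 : spreading R x y ->
      lab x = NApp a1 a2 -> lab y = NApp b1 b2 -> spreading R a1 b1
  | spr_right x y a1 a2 b1 b2 : spreading R x y ->
      lab x = NApp a1 a2 -> lab y = NApp b1 b2 -> spreading R a2 b2
  | spr_down x y a b : spreading R x y ->
      lab x = NAbs a -> lab y = NAbs b -> spreading R a b.

End LambdaGraph.

(** R^*: reflexive-symmetric-transitive closure *)
Definition rst_closure (V : Type) (R : relation V) : relation V :=
  clos_refl_sym_trans V R.

From mathcomp Require Import all_boot.
From Stdlib Require Import Relations.

Set Implicit Arguments.
Unset Strict Implicit.

(** Write S := R^{Downarrow}.  The inclusion (R^{Downarrow})^* ⊆ R^# is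
    immediate: R^# is a propagated relation containing R, hence contains S,
    and it is an equivalence relation.  For the converse it suffices to show
    that S^* is itself propagated: it then is a propagated equivalence
    relation containing R, hence contains the least one, R^#.

    The key general fact is: the equivalence closure of a homogeneous
    propagated relation S is propagated.  A chain x = z0 ~ z1 ~ ... ~ zn = y
    of S-steps (in either direction) between two application nodes stays
    among application nodes by homogeneity, and each step relates the left
    (resp. right) children by propagation; concatenating gives a chain
    between the children.  The same works for abstraction nodes. *)

Section Closure.
Variables (V : finType) (lab : V -> lnode V).

Lemma homogeneous_nodes_sym (x y : V) :
  homogeneous_nodes lab x y -> homogeneous_nodes lab y x.
Proof. by rewrite /homogeneous_nodes; case: (lab x); case: (lab y). Qed.

Lemma homogeneous_app (x y : V) (a1 a2 : V) :
  homogeneous_nodes lab x y -> lab x = NApp a1 a2 ->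
  exists b1 b2, lab y = NApp b1 b2.
Proof.
by rewrite /homogeneous_nodes => + Hx; rewrite Hx; case: (lab y) => //; eauto.
Qed.

Lemma homogeneous_abs (x y : V) (a : V) :
  homogeneous_nodes lab x y -> lab x = NAbs a -> exists b, lab y = NAbs b.
Proof.
by rewrite /homogeneous_nodes => + Hx; rewrite Hx; case: (lab y) => //; eauto.
Qed.

Variable S : relation V.
Hypotheses (homS : homogeneous lab S) (propS : propagated lab S).

Lemma step_app {x z a1 a2 : V} :
  union V S (transp V S) x z -> lab x = NApp a1 a2 ->
  exists b1 b2, lab z = NApp b1 b2 /\
    rst_closure S a1 b1 /\ rst_closure S a2 b2.
Proof.
move=> Sxz Hx.
have [b1 [b2 Hz]] : exists b1 b2, lab z = NApp b1 b2.
  case: Sxz => [Sxz | Szx]; apply: homogeneous_app Hx.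
  - exact: homS.
  - exact/homogeneous_nodes_sym/homS.
exists b1, b2; split=> //.
case: Sxz => [Sxz | Szx].
- have [S1 S2] := propS.1 _ _ _ _ _ _ Sxz Hx Hz.
  by split; apply: rst_step.
- have [S1 S2] := propS.1 _ _ _ _ _ _ Szx Hz Hx.
  by split; apply/rst_sym/rst_step.
Qed.

Lemma step_abs {x z a : V} :
  union V S (transp V S) x z -> lab x = NAbs a ->
  exists b, lab z = NAbs b /\ rst_closure S a b.
Proof.
move=> Sxz Hx.
have [b Hz] : exists b, lab z = NAbs b.
  case: Sxz => [Sxz | Szx]; apply: homogeneous_abs Hx.
  - exact: homS.
  - exact/homogeneous_nodes_sym/homS.
exists b; split=> //.
case: Sxz => [Sxz | Szx].
- exact/rst_step/(propS.2 _ _ _ _ Sxz Hx Hz).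
- exact/rst_sym/rst_step/(propS.2 _ _ _ _ Szx Hz Hx).
Qed.

Lemma rst_closure_propagated : propagated lab (rst_closure S).
Proof.
split.
- move=> x y a1 a2 b1 b2 /clos_rst_rst1n_iff Sxy.
  elim: Sxy a1 a2 => [z | u z w Suz _ IH] a1 a2 Hu Hw.
  + by move: Hw; rewrite Hu => -[<- <-]; split; apply: rst_refl.
  + have [c1 [c2 [Hz [S1 S2]]]] := step_app Suz Hu.
    have [T1 T2] := IH _ _ Hz Hw.
    by split; [apply: rst_trans S1 T1 | apply: rst_trans S2 T2].
- move=> x y a b /clos_rst_rst1n_iff Sxy.
  elim: Sxy a => [z | u z w Suz _ IH] a Hu Hw.
  + by move: Hw; rewrite Hu => -[<-]; apply: rst_refl.
  + have [c [Hz S1]] := step_abs Suz Hu.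
    exact: rst_trans S1 (IH _ Hz Hw).
Qed.

End Closure.

Section Propagation.
Variables (V : finType) (lab : V -> lnode V) (R : relation V).

Lemma propagation_propagated : propagated lab (propagation lab R).
Proof.
split=> [x y a1 a2 b1 b2 Sxy Hx Hy | x y a b Sxy Hx Hy].
- by split; [apply: prop_left Sxy Hx Hy | apply: prop_right Sxy Hx Hy].
- exact: prop_down Sxy Hx Hy.
Qed.

Lemma propagation_sub_spreading (x y : V) :
  propagation lab R x y -> spreading lab R x y.
Proof.
elim=> {x y} [x y | x y a1 a2 b1 b2 _ | x y a1 a2 b1 b2 _ | x y a b _].
- exact: spr_base.
- exact: spr_left.
- exact: spr_right.
- exact: spr_down.
Qed.

Lemma spreading_sub_rst_closure :
  propagated lab (rst_closure (propagation lab R)) ->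
  forall x y, spreading lab R x y -> rst_closure (propagation lab R) x y.
Proof.
move=> [propL propD] x y; elim=> {x y}.
- by move=> x y Rxy; apply/rst_step/prop_base.
- exact: rst_refl.
- by move=> x y _; apply: rst_sym.
- by move=> x y z _ Sxy _; apply: rst_trans Sxy.
- by move=> x y a1 a2 b1 b2 _ Sxy Hx Hy; case: (propL _ _ _ _ _ _ Sxy Hx Hy).
- by move=> x y a1 a2 b1 b2 _ Sxy Hx Hy; case: (propL _ _ _ _ _ _ Sxy Hx Hy).
- by move=> x y a b _ Sxy; apply: propD.
Qed.

End Propagation.

Theorem mainTheorem11 (V : finType) (lab : V -> lnode V) (R : relation V) :
  lambda_graph lab ->
  homogeneous lab (propagation lab R) ->
  forall x y, spreading lab R x y <-> rst_closure (propagation lab R) x y.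
Proof.
move=> _ homS x y; split.
- apply: spreading_sub_rst_closure.
  exact: rst_closure_propagated homS (propagation_propagated lab R).
- elim=> {x y} [x y /propagation_sub_spreading // | x | x y _ | x y z _ Sxy _].
  + exact: spr_refl.
  + exact: spr_sym.
  + exact: spr_trans Sxy.
Qed.
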